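(* Let $G$ be an undirected multigraph, $C\subseteq V(G)$ and $z\ge0$. If $G$ contains a $C$-certificate $H$ of order $z$, then $H$ contains (as a subgraph) a $C$-certificate $\hat H$ of order $z$ such that $\hat H-C$ has at most $\frac{|C|}{2}(z^2+2z-1)$ trees.
   Context: A feedback vertex set (FVS) of a multigraph $H$ is a set $X\subseteq V(H)$ with $H-X$ acyclic (self-loops and pairs of parallel edges count as cycles); $\mathrm{fvs}(H)$ is its minimum size. For $C\subseteq V(G)$, a $C$-certificate is a subgraph $H$ of $G$ such that $C$ is a minimum FVS of $H$; it has order $z$ if every connected component $H'$ of $H$ satisfies $\mathrm{fvs}(H')=|C\cap V(H')|\le z$. *)

(* A multigraph G is given by finite vertex/edge types and an
   endpoint map [ends : E -> V * V] (order of the pair is irrelevant: edges are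
   undirected). Self-loops (ends e = (v,v)) and parallel edges are allowed. *)
From mathcomp Require Import all_boot.
Set Implicit Arguments. Unset Strict Implicit. Unset Printing Implicit Defensive.

Section MultiGraph.
Variables (V E : finType) (ends : E -> V * V).

Definition joins (e : E) (x y : V) : bool :=
  (ends e == (x, y)) || (ends e == (y, x)).

Definition is_subgraph (W : {set V}) (F : {set E}) : bool :=
  [forall e in F, ((ends e).1 \in W) && ((ends e).2 \in W)].

(* A cycle in the graph (W, F): distinct vertices v_0..v_{k-1} in W and
   distinct edges e_0..e_{k-1} in F, k >= 1, with e_i joining v_i and v_{i+1 mod k}.
   k = 1 is a self-loop, k = 2 is a pair of parallel edges. *)
Definition has_cycle (W : {set V}) (F : {set E}) : Prop :=
  exists (vs : seq V) (es : seq E),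
    [/\ 0 < size es, size vs = size es, uniq vs & uniq es] /\
    [/\ all (fun v => v \in W) vs, all (fun e => e \in F) es &
        all (fun t => joins t.1 t.2.1 t.2.2) (zip es (zip vs (rot 1 vs)))].

Definition is_fvs (W : {set V}) (F : {set E}) (X : {set V}) : Prop :=
  X \subset W /\ ~ has_cycle (W :\: X) F.

Definition fvs_is (W : {set V}) (F : {set E}) (k : nat) : Prop :=
  (exists X, is_fvs W F X /\ #|X| = k) /\ (forall X, is_fvs W F X -> k <= #|X|).

Definition is_min_fvs (W : {set V}) (F : {set E}) (X : {set V}) : Prop :=
  is_fvs W F X /\ fvs_is W F #|X|.

Definition adj (W : {set V}) (F : {set E}) : rel V :=
  fun x y => [&& x \in W, y \in W & [exists e in F, joins e x y]].

Definition comp (W : {set V}) (F : {set E}) (x : V) : {set V} :=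
  [set y in W | connect (adj W F) x y].

Definition components (W : {set V}) (F : {set E}) : {set {set V}} :=
  [set comp W F x | x in W].

Definition edges_in (F : {set E}) (K : {set V}) : {set E} :=
  [set e in F | ((ends e).1 \in K) && ((ends e).2 \in K)].

Definition certificate (C : {set V}) (z : nat) (W : {set V}) (F : {set E}) : Prop :=
  [/\ is_subgraph W F, is_min_fvs W F C &
      forall K, K \in components W F ->
        fvs_is K (edges_in F K) #|C :&: K| /\ #|C :&: K| <= z].

Definition num_trees_minus (W : {set V}) (F : {set E}) (C : {set V}) : nat :=
  #|components (W :\: C) F|.

End MultiGraph.

(* Prune H to C together with some trees of H - C: for each c in C, z trees
   joined to c by at least two edges, and for each pair c <> d in C, z + 1 trees
   adjacent to both (all of them when there are fewer).  A vertex c has at most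
   z - 1 partners d in its component of H, so at most
   |C| z + |C| (z - 1) (z + 1) / 2 trees survive.
   C stays a minimum feedback vertex set.  Otherwise some X with |X| < |C| is a
   feedback vertex set of the pruned graph, and |X :&: K| < |C :&: K| <= z for a
   component K of H; minimality of C :&: K yields a cycle of H[K] avoiding X.
   This cycle must pass through a discarded tree T, which it enters and leaves
   through vertices c, d of C outside X.  If c = d, each of the z trees kept
   for c meets X :&: K, as it would otherwise close a cycle through c avoiding
   X; if c <> d, all but one of the z + 1 trees kept for {c, d} meet X :&: K,
   as two trees avoiding X close a cycle through c and d.  These trees are
   disjoint, so |X :&: K| >= z, a contradiction.  The conditions on the
   components pass to the pruned graph because a smaller feedback vertex set of
   one component could replace C on that component. *)

From Pilot Require Import Defs.
From mathcomp Require Import all_boot zify.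
Set Implicit Arguments. Unset Strict Implicit. Unset Printing Implicit Defensive.

Section Counting.
Variable T : finType.
Implicit Types (A B D : {set T}) (P S : {set {set T}}).

Lemma card_setI_cover P A : trivIset P -> #|A :&: cover P| = \sum_(B in P) #|A :&: B|.
Proof.
move=> tiP; rewrite -sum1_card.
rewrite (eq_bigl (fun x => (x \in cover P) && (x \in A))) => [|x]; last first.
  by rewrite in_setI andbC.
rewrite big_trivIset_cond //; apply: eq_bigr => B _.
by rewrite -sum1_card; apply: eq_bigl => x; rewrite in_setI andbC.
Qed.

Lemma card_setI_partition P D A : partition P D -> #|A :&: D| = \sum_(B in P) #|A :&: B|.
Proof. by case/and3P => /eqP <- tiP _; apply: card_setI_cover. Qed.

Lemma partition_card_lt P D A B : partition P D -> A \subset D -> #|B| < #|A| ->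
  exists2 K, K \in P & #|B :&: K| < #|A :&: K|.
Proof.
move=> partP sAD ltBA; apply/exists_inP; apply: contraLR ltBA => /exists_inPn leAB.
rewrite -leqNgt -(setIidPl sAD) (card_setI_partition A partP).
apply: leq_trans (subset_leq_card (subsetIl B D)).
rewrite (card_setI_partition B partP); apply: leq_sum => K KP.
by rewrite leqNgt leAB.
Qed.

Lemma trivIset_card_le S A : trivIset S -> {in S, forall B, B :&: A != set0} -> #|S| <= #|A|.
Proof.
move=> tiS meetA; rewrite -sum1_card.
apply: leq_trans (subset_leq_card (subsetIl A (cover S))).
rewrite card_setI_cover //; apply: leq_sum => B BS.
by rewrite card_gt0 setIC meetA.
Qed.

Lemma card_bigcup_le (I : finType) (J : {pred I}) (F : I -> {set T}) :
  #|\bigcup_(i in J) F i| <= \sum_(i in J) #|F i|.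
Proof.
elim/big_ind2: _ => [|U1 n1 U2 n2 h1 h2|//]; first by rewrite cards0.
by apply: leq_trans (leq_card_setU _ _) _; apply: leq_add.
Qed.

End Counting.

Section TakeSet.
Variable U : finType.
Implicit Type S : {set U}.

Definition take_set n (S : {set U}) := [set x in take n (enum S)].

Lemma take_set_sub n S : take_set n S \subset S.
Proof. by apply/subsetP => x; rewrite inE => /mem_take; rewrite mem_enum. Qed.

Lemma card_take_set_le n S : #|take_set n S| <= n.
Proof.
rewrite cardsE; apply: leq_trans (card_size _) _; rewrite size_take.
by case: ifP => // /negbT; rewrite -leqNgt.
Qed.

Lemma card_take_set n S x : x \in S -> x \notin take_set n S -> #|take_set n S| = n.
Proof.
move=> xS; rewrite inE cardsE (card_uniqP _); last exact: take_uniq (enum_uniq _).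
rewrite size_take; case: ifP => // /negbT; rewrite -leqNgt => h.
by rewrite take_oversize // mem_enum xS.
Qed.

End TakeSet.

Section Components.
Variables (V E : finType) (ends : E -> V * V).
Local Notation joins := (joins ends).
Local Notation adj := (adj ends).
Local Notation comp := (Defs.comp ends).
Local Notation components := (components ends).
Implicit Types (W : {set V}) (F : {set E}) (K : {set V}).

Lemma joinsC e x y : joins e x y = joins e y x.
Proof. by rewrite /joins orbC. Qed.

Lemma joins_end e x y u v : joins e x y -> joins e u v -> x = u \/ x = v.
Proof. by rewrite /joins; case: (ends e) => a b; do 2 case/orP => /eqP[? ?]; subst; auto. Qed.

Lemma joins_neq e f x y u v : joins e x y -> joins f u v -> x != u -> x != v -> e != f.
Proof.
move=> je jf xu xv; apply/eqP => ef; rewrite -ef in jf.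
by case: (joins_end je jf) => /eqP; apply/negP.
Qed.

Lemma joins_in_edges F K e x y : e \in F -> joins e x y -> x \in K -> y \in K ->
  e \in edges_in ends F K.
Proof.
rewrite /joins inE => -> /=; case: (ends e) => a b.
by case/orP => /eqP [-> ->] /= -> ->.
Qed.

Lemma edges_in_sub F K : edges_in ends F K \subset F.
Proof. by apply/subsetP => e; rewrite inE => /andP[]. Qed.

Lemma edges_in_subgraph F K : is_subgraph ends K (edges_in ends F K).
Proof. by apply/forall_inP => e; rewrite inE => /andP[]. Qed.

Lemma adjC W F : symmetric (adj W F).
Proof.
move=> x y; rewrite /adj andbCA; congr [&& _, _ & _].
by apply/exists_inP/exists_inP => -[e eF j]; exists e; rewrite // joinsC.
Qed.

Lemma connect_adjC W F : connect_sym (adj W F).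
Proof. exact/sym_connect_sym/adjC. Qed.

Lemma adjS W F W' F' : W \subset W' -> F \subset F' -> subrel (adj W F) (adj W' F').
Proof.
move=> sW sF x y /and3P[xW yW /exists_inP[e eF j]].
rewrite /adj (subsetP sW _ xW) (subsetP sW _ yW); apply/exists_inP.
by exists e; rewrite ?(subsetP sF).
Qed.

Lemma connectS W F W' F' : W \subset W' -> F \subset F' ->
  subrel (connect (adj W F)) (connect (adj W' F')).
Proof. by move=> sW sF; apply: connect_sub => x y /(adjS sW sF)/connect1. Qed.

Lemma connect_closed (e e' : rel V) (S : pred V) x y :
  x \in S -> (forall a b, a \in S -> e a b -> (b \in S) && e' a b) ->
  connect e x y -> connect e' x y.
Proof.
move=> xS h /connectP[p + ->]; elim: p x xS => [|b p IH] x xS /=; first by rewrite connect0.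
case/andP => /(h _ _ xS)/andP[bS e'xb] /(IH _ bS); exact: connect_trans (connect1 e'xb).
Qed.

Lemma mem_comp W F x y : (y \in comp W F x) = (y \in W) && connect (adj W F) x y.
Proof. by rewrite inE. Qed.

Lemma comp_id W F x : x \in W -> x \in comp W F x.
Proof. by move=> xW; rewrite mem_comp xW connect0. Qed.

Lemma comp_sub W F x : comp W F x \subset W.
Proof. by apply/subsetP => y; rewrite mem_comp => /andP[]. Qed.

Lemma comp_eq W F a x : x \in comp W F a -> comp W F a = comp W F x.
Proof.
rewrite mem_comp => /andP[_ cax]; apply/setP => y; rewrite !mem_comp.
by rewrite (same_connect (connect_adjC W F) cax).
Qed.

Lemma compS W F W' F' x : W \subset W' -> F \subset F' -> comp W F x \subset comp W' F' x.
Proof.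
move=> sW sF; apply/subsetP => y; rewrite !mem_comp => /andP[yW cxy].
by rewrite (subsetP sW _ yW) (connectS sW sF cxy).
Qed.

Lemma components_partition W F : partition (components W F) W.
Proof.
apply: equivalence_partitionP => x y z _ _ _; split; first exact: connect0.
by move=> /(same_connect (connect_adjC W F)) ->.
Qed.

Lemma components_sub W F K : K \in components W F -> K \subset W.
Proof. by case/imsetP => x _ ->; apply: comp_sub. Qed.

Lemma components_eq W F K x : K \in components W F -> x \in K -> K = comp W F x.
Proof. by case/imsetP => a _ -> /comp_eq. Qed.

Lemma components_disjoint W F K1 K2 x : K1 \in components W F -> K2 \in components W F ->
  x \in K1 -> x \in K2 -> K1 = K2.
Proof. by move=> K1P K2P /(components_eq K1P) -> /(components_eq K2P) ->. Qed.

Lemma components_connect W F K x y : K \in components W F -> x \in K -> y \in K ->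
  connect (adj W F) x y.
Proof. by move=> KP xK; rewrite (components_eq KP xK) mem_comp => /andP[]. Qed.

Lemma components_closed W F K x y : K \in components W F -> x \in K ->
  adj W F x y -> y \in K.
Proof.
move=> KP xK xy; rewrite (components_eq KP xK) mem_comp (connect1 xy) andbT.
by case/and3P: xy.
Qed.

End Components.

Lemma nth_rot1 (T : Type) (s : seq T) x0 i : i < size s ->
  nth x0 (rot 1 s) i = nth x0 s (i.+1 %% size s).
Proof.
case: s => [|x s] //= lti; rewrite rot1_cons nth_rcons.
case: (ltnP i (size s)) => h; first by rewrite modn_small.
have -> : i = size s by lia.
by rewrite eqxx modnn.
Qed.

Lemma modn_transition n (P : pred nat) i j : i < n -> j < n -> P i -> ~~ P j ->
  exists2 a, a < n & P a && ~~ P (a.+1 %% n).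
Proof.
move=> lti ltj Pi nPj; have n_gt0 : 0 < n by lia.
have [a /andP[Pa nPa] | none] := pickP (fun a : 'I_n => P a && ~~ P (a.+1 %% n)).
  by exists a; rewrite ?Pa.
have Pk k : P ((i + k) %% n).
  elim: k => [|k IH]; first by rewrite addn0 modn_small.
  have := none (Ordinal (ltn_pmod (i + k) n_gt0)).
  by rewrite /= IH /= => /negbFE; rewrite addnS -addn1 modnDml addn1.
have := Pk (j + n - i); rewrite (_ : i + _ = j + n); last by lia.
by rewrite modnDr modn_small // (negbTE nPj).
Qed.

Section Cycles.
Variables (V E : finType) (ends : E -> V * V).
Local Notation joins := (joins ends).
Local Notation adj := (adj ends).
Local Notation has_cycle := (has_cycle ends).
Implicit Types (W : {set V}) (F : {set E}) (K : {set V}).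

Definition is_cycle W F (vs : seq V) (es : seq E) : Prop :=
  [/\ 0 < size es, size vs = size es, uniq vs & uniq es] /\
  [/\ all (mem W) vs, all (mem F) es &
      all (fun t => joins t.1 t.2.1 t.2.2) (zip es (zip vs (rot 1 vs)))].

Lemma has_cycleP W F : has_cycle W F <-> exists vs es, is_cycle W F vs es.
Proof. by []. Qed.

Lemma is_cycleP W F vs es v0 e0 :
  [/\ 0 < size es, size vs = size es, uniq vs & uniq es] ->
  is_cycle W F vs es <->
  forall i, i < size es ->
    [/\ nth v0 vs i \in W, nth e0 es i \in F &
        joins (nth e0 es i) (nth v0 vs i) (nth v0 vs (i.+1 %% size es))].
Proof.
move=> shape; have [_ sz _ _] := shape.
have szz : size (zip vs (rot 1 vs)) = size es by rewrite size_zip size_rot minnn.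
have nth_zip2 i : i < size es -> nth (e0, (v0, v0)) (zip es (zip vs (rot 1 vs))) i =
    (nth e0 es i, (nth v0 vs i, nth v0 vs (i.+1 %% size es))).
  by move=> lti; rewrite nth_zip ?szz // nth_zip ?size_rot //= nth_rot1 ?sz.
split=> [[_ [/all_nthP aW /all_nthP aF /all_nthP aJ]] i lti | h].
  split; [by apply: aW; rewrite sz | exact: aF |].
  by have := aJ (e0, (v0, v0)) i; rewrite size_zip szz minnn nth_zip2 //; apply.
split=> //; split.
- by apply/(all_nthP v0) => i; rewrite sz => /h[].
- by apply/(all_nthP e0) => i /h[].
apply/(all_nthP (e0, (v0, v0))) => i; rewrite size_zip szz minnn => lti.
by rewrite nth_zip2 //; case: (h i lti).
Qed.

Lemma is_cycle_shape W F vs es : is_cycle W F vs es ->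
  [/\ 0 < size es, size vs = size es, uniq vs & uniq es].
Proof. by case. Qed.

Lemma is_cycle_nth W F vs es v0 e0 i : is_cycle W F vs es -> i < size es ->
  [/\ nth v0 vs i \in W, nth e0 es i \in F &
      joins (nth e0 es i) (nth v0 vs i) (nth v0 vs (i.+1 %% size es))].
Proof. by move=> c; move: i; apply/(is_cycleP _ _ v0 e0 (is_cycle_shape c)). Qed.

Lemma is_cycle_vertex W F vs es v0 v : is_cycle W F vs es -> v \in vs ->
  exists2 i, i < size es & v = nth v0 vs i.
Proof.
case=> [[_ sz _ _] _] vin; exists (index v vs); first by rewrite -sz index_mem.
by rewrite nth_index.
Qed.

Lemma is_cycle_nonempty W F vs es : is_cycle W F vs es ->
  exists (v0 : V) (e0 : E), v0 \in vs /\ e0 \in es.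
Proof.
case=> [[+ + _ _] _]; case: vs => [|v ?]; case: es => [|e ?] //= _ _.
by exists v, e; rewrite !mem_head.
Qed.

Lemma is_cycle_sub W F vs es : is_cycle W F vs es -> {subset vs <= W}.
Proof. by case=> _ [/allP]. Qed.

Lemma has_cycle_transfer W F vs es W' F' : is_cycle W F vs es ->
  {subset vs <= W'} ->
  (forall e x y, e \in F -> x \in W' -> y \in W' -> joins e x y -> e \in F') ->
  has_cycle W' F'.
Proof.
move=> c sW' sF'; have shape := is_cycle_shape c; have [pos sz _ _] := shape.
have [v0 [e0 _]] := is_cycle_nonempty c.
exists vs, es; apply/(is_cycleP _ _ v0 e0 shape) => i lti.
have [_ eF j] := is_cycle_nth v0 e0 c lti.
have inW k : k < size es -> nth v0 vs k \in W'.
  by move=> ltk; apply/sW'/mem_nth; rewrite /= sz.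
have ltS : i.+1 %% size es < size es by rewrite ltn_mod.
by split; rewrite ?inW //; apply: sF' j; rewrite ?inW.
Qed.

Lemma is_cycleS W F W' F' vs es : W \subset W' -> F \subset F' ->
  is_cycle W F vs es -> is_cycle W' F' vs es.
Proof.
move=> /subsetP sW /subsetP sF [shape [aW aF aJ]].
by split=> //; split=> //; [apply: sub_all aW | apply: sub_all aF].
Qed.

Lemma has_cycleS W F W' F' : W \subset W' -> F \subset F' ->
  has_cycle W F -> has_cycle W' F'.
Proof. by move=> sW sF [vs [es /(is_cycleS sW sF) c]]; exists vs, es. Qed.

Lemma is_cycle_connect W F vs es : is_cycle W F vs es ->
  {in vs &, forall x y, connect (adj W F) x y}.
Proof.
move=> c x y xin yin; have [v0 [e0 _]] := is_cycle_nonempty c.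
have [[_ sz _ _] _] := c.
have from0 k : k < size es -> connect (adj W F) (nth v0 vs 0) (nth v0 vs k).
  elim: k => [|k IH] ltk; first exact: connect0.
  apply: connect_trans (IH (ltnW ltk)) (connect1 _).
  have [kW eF j] := is_cycle_nth v0 e0 c (ltnW ltk); move: j; rewrite modn_small // => j.
  rewrite /adj kW (is_cycle_sub c) ?mem_nth ?sz //=.
  by apply/exists_inP; exists (nth e0 es k).
have [i lti ->] := is_cycle_vertex v0 c xin; have [j ltj ->] := is_cycle_vertex v0 c yin.
by apply: connect_trans (from0 j ltj); rewrite connect_adjC; apply: from0.
Qed.

Lemma is_cycle_component W F vs es K x : is_cycle W F vs es ->
  K \in components ends W F -> x \in vs -> x \in K -> {subset vs <= K}.
Proof.
move=> c KP xin xK y yin; rewrite (components_eq KP xK) mem_comp (is_cycle_sub c) //.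
exact: (is_cycle_connect c).
Qed.

Lemma is_cycle_exit W F vs es v0 (T : {set V}) : is_cycle W F vs es ->
  (exists2 x, x \in vs & x \in T) -> (exists2 y, y \in vs & y \notin T) ->
  exists2 a, a < size es & (nth v0 vs a \in T) && (nth v0 vs (a.+1 %% size es) \notin T).
Proof.
move=> c [x xin xT] [y yin yT].
have [i lti ei] := is_cycle_vertex v0 c xin; have [j ltj ej] := is_cycle_vertex v0 c yin.
by apply: (modn_transition (P := fun k => nth v0 vs k \in T) lti ltj); rewrite /= -?ei -?ej.
Qed.

End Cycles.

Section EdgePath.
Variables (V E : finType) (ends : E -> V * V).
Local Notation joins := (joins ends).
Local Notation adj := (adj ends).
Implicit Types (W : {set V}) (F : {set E}).

Definition edge_joining F (e0 : E) x y := odflt e0 [pick f in F | joins f x y].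

Definition path_edges F e0 x p := [seq edge_joining F e0 t.1 t.2 | t <- zip (x :: p) p].

Lemma size_path_edges F e0 x p : size (path_edges F e0 x p) = size p.
Proof. by rewrite size_map size_zip /= (minn_idPr (leqnSn _)). Qed.

Lemma edge_joiningP W F e0 x y : adj W F x y ->
  edge_joining F e0 x y \in F /\ joins (edge_joining F e0 x y) x y.
Proof.
case/and3P=> _ _ /exists_inP[f fF j]; rewrite /edge_joining.
by case: pickP => [f' /andP[] | /(_ f)] //=; rewrite fF j.
Qed.

Lemma path_edges_nth W F e0 x p i : path (adj W F) x p -> i < size p ->
  [/\ nth x (x :: p) i \in W, nth e0 (path_edges F e0 x p) i \in F &
      joins (nth e0 (path_edges F e0 x p) i) (nth x (x :: p) i) (nth x p i)].
Proof.
move=> /(pathP x) step lti; have := step i lti; have [] := edge_joiningP e0 (step i lti).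
rewrite /path_edges (nth_map (x, x)) ?nth_zip_cond /=; last first.
  by rewrite size_zip /= (minn_idPr (leqnSn _)).
by rewrite size_zip /= (minn_idPr (leqnSn _)) lti => fF j /and3P[].
Qed.

Lemma uniq_path_edges W F e0 x p : path (adj W F) x p -> uniq (x :: p) ->
  uniq (path_edges F e0 x p).
Proof.
move=> pth up; apply/(uniqP e0) => i k; rewrite !inE size_path_edges => lti ltk eq_ik.
have [_ _ ji] := path_edges_nth e0 pth lti; have [_ _ jk] := path_edges_nth e0 pth ltk.
rewrite eq_ik in ji.
have nth_inj a b : a < (size p).+1 -> b < (size p).+1 ->
    nth x (x :: p) a = nth x (x :: p) b -> a = b.
  by move=> la lb /eqP; rewrite nth_uniq // => /eqP.
case: (joins_end ji jk) => [/nth_inj -> // | /(nth_inj i k.+1) ik]; try lia.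
case: (joins_end jk ji) => [/nth_inj | /(nth_inj k i.+1)]; lia.
Qed.

Lemma has_cycle_edge_path W F e x y : e \in F -> x \in W -> joins e x y ->
  connect (adj W (F :\ e)) y x -> has_cycle ends W F.
Proof.
move=> eF xW j /connectP[p0 pth0 lx]; move: lx.
case: (shortenP pth0) => p pth up _ lx {pth0 p0}; subst x.
set es := rcons (path_edges (F :\ e) e y p) e.
have szes : size es = (size p).+1 by rewrite size_rcons size_path_edges.
have shape : [/\ 0 < size es, size (y :: p) = size es, uniq (y :: p) & uniq es].
  split; rewrite ?szes //= rcons_uniq (uniq_path_edges e pth up) andbT.
  apply/(nthP e) => -[i]; rewrite size_path_edges => lti.
  by have [_ /setD1P[/eqP]] := path_edges_nth e pth lti.
apply/has_cycleP; exists (y :: p), es; apply/(is_cycleP ends W F y e shape) => i; rewrite szes ltnS.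
rewrite leq_eqVlt => /orP[/eqP -> | lti].
  by rewrite /es nth_rcons size_path_edges ltnn eqxx modnn /= -last_nth.
have [iW /setD1P[_ fF] jf] := path_edges_nth e pth lti.
by rewrite /es nth_rcons size_path_edges lti modn_small.
Qed.

End EdgePath.

Section Certificates.
Variables (V E : finType) (ends : E -> V * V).
Local Notation is_fvs := (is_fvs ends).
Local Notation comp := (Defs.comp ends).
Local Notation components := (components ends).
Implicit Types (W : {set V}) (F : {set E}) (C K X Y : {set V}).

Lemma is_fvs_component W F C K : is_fvs W F C -> K \subset W ->
  is_fvs K (edges_in ends F K) (C :&: K).
Proof.
case=> _ noC sKW; split; first exact: subsetIr.
move/(has_cycleS _ (edges_in_sub _ _ _)); apply: contra_not noC; apply.
apply/subsetP => v /setDP[vK]; rewrite inE vK andbT => vC.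
by rewrite inE vC (subsetP sKW).
Qed.

Lemma is_fvs_replace_component W F C K Y : K \in components W F -> is_fvs W F C ->
  is_fvs K (edges_in ends F K) Y -> is_fvs W F ((C :\: K) :|: Y).
Proof.
move=> KP [sCW noC] [sYK noY]; have sKW := components_sub KP.
split=> [|/has_cycleP[vs [es c]]].
  by rewrite subUset (subset_trans (subsetDl _ _)) // (subset_trans sYK).
have vsW := is_cycle_sub c.
have [[x xin xK] | disjK] := altP (@hasP _ (mem K) vs).
  have vsK := is_cycle_component (is_cycleS (subsetDl _ _) (subxx _) c) KP xin xK.
  apply: noY; apply: (has_cycle_transfer c) => [v vin | e a b eF /setDP[aK _] /setDP[bK _]].
    by move: (vsW v vin); rewrite !inE vsK //= => /andP[->].
  by move=> j; apply: joins_in_edges j aK bK.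
apply: noC; apply: (has_cycle_transfer c) => [v vin | //].
have vK : v \notin K by apply: contra disjK => vK; apply/hasP; exists v.
by move: (vsW v vin); rewrite !inE (negbTE vK) /= negb_or => /andP[/andP[-> _] ->].
Qed.

Lemma certificate_subgraph C z W F W' F' : certificate ends C z W F ->
  W' \subset W -> F' \subset F -> is_subgraph ends W' F' -> C \subset W' ->
  (forall X, is_fvs W' F' X -> #|C| <= #|X|) -> certificate ends C z W' F'.
Proof.
move=> [_ [[_ noC] _] compW] sW sF subW' sCW' minC.
have fvsC : is_fvs W' F' C by split=> // /(has_cycleS (setSD C sW) sF).
split=> // [|_ /imsetP[x xW' ->]]; first by split=> //; split; [exists C | ].
have /compW[_ leCz] : comp W F x \in components W F.
  by apply: imset_f; apply: (subsetP sW).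
split; last by apply: leq_trans leCz; apply/subset_leq_card/setIS/compS.
have KP : comp W' F' x \in components W' F' by apply: imset_f.
split=> [|Y fvsY].
  exists (C :&: comp W' F' x); split=> //.
  exact: is_fvs_component fvsC (comp_sub _ _ _ _).
rewrite leqNgt; apply/negP => ltY.
have := minC _ (is_fvs_replace_component KP fvsC fvsY); apply/negP; rewrite -ltnNge.
apply: leq_ltn_trans (leq_card_setU _ _) _.
by rewrite -(cardsID (comp W' F' x) C) addnC ltn_add2r.
Qed.

Lemma certificate_order_gt0 C z W F c : certificate ends C z W F -> c \in C -> 0 < z.
Proof.
case=> _ [[sCW _] _] compW cC; have cW := subsetP sCW _ cC.
have [_ leCz] := compW _ (imset_f (comp W F) cW).
by apply: leq_trans leCz; rewrite card_gt0; apply/set0Pn; exists c; rewrite inE cC comp_id.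
Qed.

End Certificates.

Lemma trees_count_arith n z t L : 0 < z -> t <= n * z + L * z.+1 -> 2 * L <= n * z.-1 ->
  2 * t + n <= n * (z ^ 2 + 2 * z).
Proof. by case: z => // k _ /= ht hL; have := leq_mul hL (leqnn k.+2); lia. Qed.

Section Pruning.
Variables (V E : finType) (ends : E -> V * V) (C : {set V}) (z : nat)
  (WH : {set V}) (FH : {set E}).
Local Notation joins := (joins ends).
Local Notation adj := (adj ends).
Local Notation has_cycle := (has_cycle ends).
Local Notation comp := (Defs.comp ends).
Local Notation components := (components ends).
Implicit Types (T K X : {set V}) (c d : V).

Definition trees := components (WH :\: C) FH.

Definition edges_to c T := [set e in FH | [exists u in T, joins e c u]].

Definition loop_trees c := [set T in trees | 1 < #|edges_to c T|].

Definition link_trees c d :=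
  [set T in trees | (edges_to c T != set0) && (edges_to d T != set0)].

Definition linked_pairs := [set p : V * V |
  [&& p.1 \in C, p.2 \in C, p.1 != p.2 & link_trees p.1 p.2 != set0]].

(* One orientation of each unordered pair {c, d}. *)
Definition linked_pairs_lt := [set p in linked_pairs | enum_rank p.1 < enum_rank p.2].

Definition kept_trees :=
  (\bigcup_(c in C) take_set z (loop_trees c)) :|:
  \bigcup_(p in linked_pairs_lt) take_set z.+1 (link_trees p.1 p.2).

Definition pruned_vertices := C :|: cover kept_trees.

Definition pruned_edges := edges_in ends FH pruned_vertices.

Local Notation Wp := pruned_vertices.
Local Notation Fp := pruned_edges.

Lemma trees_sub T : T \in trees -> T \subset WH :\: C.
Proof. exact: components_sub. Qed.

Lemma trees_WH T x : T \in trees -> x \in T -> x \in WH.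
Proof. by move=> /trees_sub/subsetP sT /sT/setDP[]. Qed.

Lemma trees_notC T x : T \in trees -> x \in T -> x \notin C.
Proof. by move=> /trees_sub/subsetP sT /sT/setDP[]. Qed.

Lemma trees_neC T c x : T \in trees -> c \in C -> x \in T -> x != c.
Proof. by move=> TT cC /(trees_notC TT); apply: contraNneq => ->. Qed.

Lemma trivIset_trees (S : {set {set V}}) : S \subset trees -> trivIset S.
Proof.
by move=> sS; apply: trivIsetS sS _; case/and3P: (components_partition ends (WH :\: C) FH).
Qed.

Lemma trees_boundary T x y f : T \in trees -> x \in T -> y \in WH -> f \in FH ->
  joins f x y -> y \notin T -> y \in C.
Proof.
move=> TT xT yW fF j; apply: contraNT => yC; apply: (components_closed TT xT).
by rewrite /adj !inE yC yW (trees_notC TT xT) (trees_WH TT xT); apply/exists_inP; exists f.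
Qed.

Lemma edges_toP c T e : e \in edges_to c T -> e \in FH /\ exists2 u, u \in T & joins e c u.
Proof. by rewrite inE => /andP[eF /exists_inP[u uT j]]; split=> //; exists u. Qed.

Lemma edges_to_connect c T e y : T \in trees -> c \in WH -> e \in edges_to c T -> y \in T ->
  connect (adj WH FH) c y.
Proof.
move=> TT cW /edges_toP[eF [u uT j]] yT; apply: (@connect_trans _ _ u).
  by apply: connect1; rewrite /adj cW (trees_WH TT uT); apply/exists_inP; exists e.
exact: connectS (subsetDl WH C) (subxx FH) _ _ (components_connect TT uT yT).
Qed.

Lemma trees_sub_component T K c : T \in trees -> K \in components WH FH -> c \in K ->
  edges_to c T != set0 -> T \subset K.
Proof.
move=> TT KP cK /set0Pn[e eE]; apply/subsetP => y yT.
rewrite (components_eq KP cK) mem_comp (trees_WH TT yT).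
by apply: edges_to_connect eE yT; rewrite // (subsetP (components_sub KP)).
Qed.

Lemma kept_trees_sub : kept_trees \subset trees.
Proof.
apply/subsetP => T; rewrite inE => /orP[] /bigcupP[i _ /(subsetP (take_set_sub _ _))].
  by rewrite inE => /andP[].
by rewrite inE => /andP[].
Qed.

Lemma loop_kept c T : c \in C -> T \in take_set z (loop_trees c) -> T \in kept_trees.
Proof. by move=> cC TS; rewrite inE; apply/orP; left; apply/bigcupP; exists c. Qed.

Lemma link_kept p T : p \in linked_pairs_lt -> T \in take_set z.+1 (link_trees p.1 p.2) ->
  T \in kept_trees.
Proof. by move=> pL TS; rewrite inE; apply/orP; right; apply/bigcupP; exists p. Qed.

Lemma kept_sub_pruned T : T \in kept_trees -> T \subset Wp.
Proof. by move=> TK; apply/subsetP => x xT; rewrite inE; apply/orP; right; apply/bigcupP; exists T.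
Qed.

Lemma C_sub_pruned : C \subset Wp.
Proof. exact: subsetUl. Qed.

Lemma pruned_sub : C \subset WH -> Wp \subset WH.
Proof.
move=> CW; rewrite subUset CW; apply/bigcupsP => T /(subsetP kept_trees_sub)/trees_sub.
by move/subset_trans; apply; apply: subsetDl.
Qed.

Lemma pruned_edges_sub : Fp \subset FH.
Proof. exact: edges_in_sub. Qed.

Lemma adj_pruned X e f a b : f \in FH -> joins f a b -> a \in Wp :\: X -> b \in Wp :\: X ->
  f != e -> adj (Wp :\: X) (Fp :\ e) a b.
Proof.
move=> fF j aWX bWX fe; rewrite /adj aWX bWX; apply/exists_inP; exists f => //.
by case/setDP: aWX => aW _; case/setDP: bWX => bW _; rewrite in_setD1 fe (joins_in_edges fF j).
Qed.

Lemma kept_sub_pruned_avoid X T x : T \in kept_trees -> [disjoint T & X] -> x \in T ->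
  x \in Wp :\: X.
Proof.
by move=> TK dTX xT; rewrite inE (subsetP (kept_sub_pruned TK)) // andbT (disjointFr dTX xT).
Qed.

Lemma C_sub_pruned_avoid X c : c \in C -> c \notin X -> c \in Wp :\: X.
Proof. by move=> cC cX; rewrite inE cX (subsetP C_sub_pruned). Qed.

Lemma kept_tree_connect X T e c u : T \in kept_trees -> [disjoint T & X] ->
  c \in C -> joins e c u -> {in T &, forall x y, connect (adj (Wp :\: X) (Fp :\ e)) x y}.
Proof.
move=> TK dTX cC jc x y xT yT; have TT := subsetP kept_trees_sub _ TK.
have inWX := kept_sub_pruned_avoid TK dTX.
apply: (connect_closed xT _ (components_connect TT xT yT)) => a b aT ab.
have bT := components_closed TT aT ab; rewrite [b \in _]bT /=.
case/and3P: ab => _ _ /exists_inP[f fF j]; apply: (adj_pruned fF j (inWX _ aT) (inWX _ bT)).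
apply: contraTneq aT => fe; rewrite fe in j.
have cT : c \notin T by apply: contraTN cC => /(trees_notC TT).
by case: (joins_end jc j) => [<- // | cb]; rewrite cb bT in cT.
Qed.

Lemma loop_tree_cycle X c T : c \in C -> c \notin X -> T \in kept_trees ->
  1 < #|edges_to c T| -> [disjoint T & X] -> has_cycle (Wp :\: X) Fp.
Proof.
move=> cC cX TK /card_gt1P[e1 [e2 [/edges_toP[e1F [u uT j1]] /edges_toP[e2F [w wT j2]] ne]]] dTX.
have inWX := kept_sub_pruned_avoid TK dTX; have cWX := C_sub_pruned_avoid cC cX.
apply: (has_cycle_edge_path _ cWX j1).
  by case/setDP: cWX (inWX _ uT) => cW _ /setDP[uW _]; apply: joins_in_edges j1 cW uW.
apply: connect_trans (kept_tree_connect TK dTX cC j1 uT wT) (connect1 _).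
apply: (adj_pruned e2F _ (inWX _ wT) cWX); first by rewrite joinsC.
by rewrite eq_sym.
Qed.

Lemma link_trees_cycle X c d T1 T2 : c \in C -> c \notin X -> d \in C -> d \notin X ->
  c != d -> T1 \in kept_trees -> T2 \in kept_trees -> T1 != T2 ->
  T1 \in link_trees c d -> T2 \in link_trees c d ->
  [disjoint T1 & X] -> [disjoint T2 & X] -> has_cycle (Wp :\: X) Fp.
Proof.
move=> cC cX dC dX cd T1K T2K T12; rewrite !inE.
move=> /andP[TT1 /andP[/set0Pn[e1 E1] /set0Pn[f1 F1]]].
move=> /andP[TT2 /andP[/set0Pn[e2 E2] /set0Pn[f2 F2]]] dT1X dT2X.
have [e1F [u1 u1T j1]] := edges_toP E1; have [f1F [w1 w1T k1]] := edges_toP F1.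
have [e2F [u2 u2T j2]] := edges_toP E2; have [f2F [w2 w2T k2]] := edges_toP F2.
have inWX1 := kept_sub_pruned_avoid T1K dT1X; have inWX2 := kept_sub_pruned_avoid T2K dT2X.
have cWX := C_sub_pruned_avoid cC cX; have dWX := C_sub_pruned_avoid dC dX.
apply: (has_cycle_edge_path _ cWX j1).
  by case/setDP: cWX (inWX1 _ u1T) => cW _ /setDP[uW _]; apply: joins_in_edges j1 cW uW.
apply: connect_trans (kept_tree_connect T1K dT1X cC j1 u1T w1T) _.
apply: (@connect_trans _ _ d).
  apply/connect1/(adj_pruned f1F _ (inWX1 _ w1T) dWX); first by rewrite joinsC.
  by rewrite eq_sym (joins_neq j1 k1 cd) // eq_sym (trees_neC TT1 cC w1T).
apply: (@connect_trans _ _ w2).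
  apply/connect1/(adj_pruned f2F k2 dWX (inWX2 _ w2T)).
  by rewrite eq_sym (joins_neq j1 k2 cd) // eq_sym (trees_neC TT2 cC w2T).
apply: connect_trans (kept_tree_connect T2K dT2X cC j1 w2T u2T) (connect1 _).
apply: (adj_pruned e2F _ (inWX2 _ u2T) cWX); first by rewrite joinsC.
apply: contra T12 => /eqP e21; rewrite e21 in j2.
rewrite joinsC in j1; rewrite joinsC in j2.
case: (joins_end j1 j2) => [u12 | u1c]; last by move: (trees_neC TT1 cC u1T); rewrite u1c eqxx.
by rewrite u12 in u1T; rewrite (components_disjoint TT1 TT2 u1T u2T).
Qed.

Lemma link_treesC c d : link_trees c d = link_trees d c.
Proof. by apply/setP => T; rewrite !inE [(_ != set0) && _]andbC. Qed.

Lemma linked_pairs_lt_mem c d : c \in C -> d \in C -> c != d -> link_trees c d != set0 ->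
  exists2 p, p \in linked_pairs_lt & link_trees p.1 p.2 = link_trees c d.
Proof.
move=> cC dC cd ne; have [lt | gt | eq] := ltngtP (enum_rank c) (enum_rank d).
- by exists (c, d); rewrite // !inE cC dC cd ne.
- by exists (d, c); [rewrite !inE dC cC eq_sym cd link_treesC ne | exact: link_treesC].
- by move/ord_inj/enum_rank_inj: eq cd => ->; rewrite eqxx.
Qed.

Lemma trees_meet_component X K c T : T \in trees -> K \in components WH FH -> c \in K ->
  edges_to c T != set0 -> ~~ [disjoint T & X] -> T :&: (X :&: K) != set0.
Proof.
move=> TT KP cK ne; have sTK := trees_sub_component TT KP cK ne.
by rewrite setIA (setIidPl (subset_trans (subsetIl T X) sTK)) setI_eq0.
Qed.

Lemma loop_trees_bound X K c T : ~ has_cycle (Wp :\: X) Fp -> K \in components WH FH ->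
  c \in C -> c \in K -> c \notin X -> T \in loop_trees c -> T \notin kept_trees ->
  z <= #|X :&: K|.
Proof.
move=> noX KP cC cK cX TL TnK.
have Tsel : T \notin take_set z (loop_trees c) by apply: contra TnK; apply: loop_kept.
have sel T' : T' \in take_set z (loop_trees c) -> T' \in trees /\ 1 < #|edges_to c T'|.
  by move/(subsetP (take_set_sub _ _)); rewrite inE => /andP[].
rewrite -(card_take_set TL Tsel); apply: trivIset_card_le => [|T' T'S].
  by apply/trivIset_trees/subsetP => T' /sel[].
have [TT' l1] := sel T' T'S.
apply: trees_meet_component TT' KP cK _ _; first by rewrite -card_gt0 ltnW.
by apply/negP => /(loop_tree_cycle cC cX (loop_kept cC T'S) l1).
Qed.

Lemma link_trees_bound X K c d T : ~ has_cycle (Wp :\: X) Fp -> K \in components WH FH ->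
  c \in C -> c \in K -> c \notin X -> d \in C -> d \notin X -> c != d ->
  T \in link_trees c d -> T \notin kept_trees -> z <= #|X :&: K|.
Proof.
move=> noX KP cC cK cX dC dX cd TL TnK.
have [p pL eLp] : exists2 p, p \in linked_pairs_lt & link_trees p.1 p.2 = link_trees c d.
  by apply: linked_pairs_lt_mem => //; apply/set0Pn; exists T.
set S := take_set z.+1 (link_trees c d).
have SK T' : T' \in S -> T' \in kept_trees by rewrite /S -eLp; apply: link_kept.
have sel T' : T' \in S -> T' \in trees /\ T' \in link_trees c d.
  by move/(subsetP (take_set_sub _ _)) => L; split=> //; move: L; rewrite inE => /andP[].
have Tsel : T \notin S by apply: contra TnK; apply: SK.
set S' := [set T' in S | ~~ [disjoint T' & X]].
have free_le1 : #|S :\: S'| <= 1.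
  apply/card_le1_eqP => T1 T2 /setDP[T1S]; rewrite inE T1S /= negbK => dT1X.
  move=> /setDP[T2S]; rewrite inE T2S /= negbK => dT2X.
  have [// | T12] := eqVneq T1 T2; have [_ L1] := sel T1 T1S; have [_ L2] := sel T2 T2S.
  by case: noX; apply: link_trees_cycle cC cX dC dX cd (SK _ T1S) (SK _ T2S) T12 L1 L2 dT1X dT2X.
have hit_le : #|S'| <= #|X :&: K|.
  apply: trivIset_card_le => [|T' /setIdP[T'S meet]].
    by apply/trivIset_trees/subsetP => T' /setIdP[/sel[]].
  have [TT' L'] := sel T' T'S; apply: trees_meet_component TT' KP cK _ meet.
  by move: L'; rewrite inE => /and3P[].
have sS'S : S' \subset S by apply/subsetP => T' /setIdP[].
rewrite -(leq_add2r 1) addn1 -(card_take_set TL Tsel) -(cardsID S' S) (setIidPr sS'S).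
exact: leq_add hit_le free_le1.
Qed.

Lemma cycle_leaves_tree vs es T : is_cycle ends WH FH vs es -> T \in trees ->
  (exists2 x, x \in vs & x \in T) -> (exists2 y, y \in vs & y \notin T) ->
  exists c1 c2 e1 e2, [/\ c1 \in vs, c2 \in vs, c1 \in C & c2 \in C] /\
    [/\ e1 \in edges_to c1 T, e2 \in edges_to c2 T & e1 != e2].
Proof.
move=> c TT [x xin xT] [y yin yT]; have [_ [e0 _]] := is_cycle_nonempty c.
have [[pos sz _ ues] _] := c.
have [a lta /andP[aT a1T]] : exists2 a, a < size es &
    (nth x vs a \in T) && (nth x vs (a.+1 %% size es) \notin T).
  by apply: is_cycle_exit c _ _; [exists x | exists y].
have [b ltb /andP[bT b1T]] : exists2 b, b < size es &
    (nth x vs b \in ~: T) && (nth x vs (b.+1 %% size es) \notin ~: T).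
  by apply: is_cycle_exit c _ _; [exists y; rewrite ?inE | exists x; rewrite ?inE ?negbK].
rewrite inE in bT; rewrite inE negbK in b1T.
have [_ eaF ja] := is_cycle_nth x e0 c lta; have [_ ebF jb] := is_cycle_nth x e0 c ltb.
have ltS i : i < size es -> i.+1 %% size es < size es by rewrite ltn_mod.
have invs i : i < size es -> nth x vs i \in vs by move=> lti; rewrite mem_nth ?sz.
exists (nth x vs (a.+1 %% size es)), (nth x vs b), (nth e0 es a), (nth e0 es b); split; split.
- exact/invs/ltS.
- exact: invs.
- by apply: (trees_boundary TT aT _ eaF ja a1T); apply/(is_cycle_sub c)/invs/ltS.
- apply: (trees_boundary TT b1T _ ebF _ bT); first exact/(is_cycle_sub c)/invs.
  by rewrite joinsC.
- by rewrite inE eaF; apply/exists_inP; exists (nth x vs a); rewrite // joinsC.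
- by rewrite inE ebF; apply/exists_inP; exists (nth x vs (b.+1 %% size es)).
rewrite nth_uniq //; apply: contraTneq aT => ->; exact: bT.
Qed.

Lemma pruned_fvs_min X : certificate ends C z WH FH -> is_fvs ends Wp Fp X -> #|C| <= #|X|.
Proof.
case=> _ [[CWH noC] _] compW [_ noX]; rewrite leqNgt; apply/negP => ltX.
have [K KP ltK] := partition_card_lt (components_partition ends WH FH) CWH ltX.
have [[_ minK] leKz] := compW K KP.
have zX : z <= #|X :&: K| -> False by rewrite leqNgt (leq_trans ltK leKz).
have notfvs : ~ is_fvs ends K (edges_in ends FH K) (X :&: K) by move/minK; rewrite leqNgt ltK.
apply: notfvs; split=> [|/has_cycleP[vs [es c]]]; first exact: subsetIr.
have vsKX v : v \in vs -> (v \in K) && (v \notin X).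
  by move/(is_cycle_sub c); rewrite !inE; case: (v \in K); rewrite ?andbT ?andbF.
have cH : is_cycle ends WH FH vs es.
  by apply: is_cycleS c; rewrite ?edges_in_sub // (subset_trans (subsetDl _ _) (components_sub KP)).
have [/allP vsWp | /allPn[v vin vWp]] := boolP (all (fun v => v \in Wp) vs).
  apply: noX; apply: (has_cycle_transfer c) => [v vin | e a b /setIdP[eF _]].
    by rewrite in_setD vsWp // andbT; case/andP: (vsKX v vin).
  by move=> /setDP[aW _] /setDP[bW _] j; apply: joins_in_edges eF j aW bW.
have vWC : v \in WH :\: C.
  rewrite inE (is_cycle_sub cH vin) andbT.
  by apply: contra vWp => /(subsetP C_sub_pruned).
pose T := comp (WH :\: C) FH v.
have TT : T \in trees by apply: imset_f.
have vT : v \in T by apply: comp_id.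
have TnK : T \notin kept_trees by apply: contra vWp => /kept_sub_pruned/subsetP; apply.
have [/allP vsT | /allPn[w win wT]] := boolP (all (fun v => v \in T) vs).
  by apply: noC; apply: (has_cycle_transfer cH) => [u /vsT/(subsetP (trees_sub TT)) | ].
have [c1 [c2 [e1 [e2 [[c1in c2in c1C c2C] [E1 E2 ne]]]]]] :=
  cycle_leaves_tree cH TT (ex_intro2 _ _ v vin vT) (ex_intro2 _ _ w win wT).
have /andP[c1K c1X] := vsKX _ c1in; have /andP[_ c2X] := vsKX _ c2in.
apply: zX; have [c12 | c12] := eqVneq c1 c2.
  apply: loop_trees_bound noX KP c1C c1K c1X _ TnK.
  by rewrite inE TT; apply/card_gt1P; exists e1, e2; rewrite -c12 in E2.
apply: link_trees_bound noX KP c1C c1K c1X c2C c2X c12 _ TnK.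
by rewrite inE TT; apply/and3P; split=> //; apply/set0Pn; [exists e1 | exists e2].
Qed.

Lemma pruned_component_kept x : C \subset WH -> x \in Wp :\: C ->
  comp (Wp :\: C) Fp x \in kept_trees.
Proof.
move=> CWH /setDP[]; rewrite inE => /orP[-> // | /bigcupP[T TK xT]] xC.
have TT := subsetP kept_trees_sub _ TK; have sTWp := subsetP (kept_sub_pruned TK).
suff -> : comp (Wp :\: C) Fp x = T by [].
apply/setP => y; rewrite mem_comp; apply/idP/idP => [/andP[yW cxy] | yT].
  rewrite (components_eq TT xT) mem_comp (connectS _ pruned_edges_sub cxy) ?setSD ?pruned_sub //.
  by case/setDP: yW => /(subsetP (pruned_sub CWH)) yWH yC; rewrite inE yC yWH.
rewrite in_setD (trees_notC TT yT) sTWp //=.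
apply: (connect_closed xT _ (components_connect TT xT yT)) => a b aT ab.
have bT := components_closed TT aT ab; rewrite [b \in _]bT /=.
case/and3P: ab => _ _ /exists_inP[f fF j].
rewrite /adj !in_setD (trees_notC TT aT) (trees_notC TT bT) !sTWp //=.
by apply/exists_inP; exists f; rewrite // (joins_in_edges fF j) ?sTWp.
Qed.

Lemma pruned_num_trees_le_kept : C \subset WH -> num_trees_minus ends Wp Fp C <= #|kept_trees|.
Proof.
move=> CWH; apply/subset_leq_card/subsetP => _ /imsetP[x xWC ->].
exact: pruned_component_kept.
Qed.

Lemma card_kept_trees_le : #|kept_trees| <= #|C| * z + #|linked_pairs_lt| * z.+1.
Proof.
apply: leq_trans (leq_card_setU _ _) (leq_add _ _).
  apply: leq_trans (card_bigcup_le _ _) _; rewrite -sum_nat_const.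
  by apply: leq_sum => c _; apply: card_take_set_le.
apply: leq_trans (card_bigcup_le _ _) _; rewrite -sum_nat_const.
by apply: leq_sum => p _; apply: card_take_set_le.
Qed.

Lemma card_linked_pairs_lt : 2 * #|linked_pairs_lt| <= #|linked_pairs|.
Proof.
pose swap (p : V * V) := (p.2, p.1).
have swap_inj : injective swap by move=> [a b] [c d] [-> ->].
have disj : linked_pairs_lt :&: swap @: linked_pairs_lt = set0.
  apply/setP => q; rewrite !inE; apply/negP => /andP[/andP[_ lt1] /imsetP[p /setIdP[_ lt2] eq]].
  by move: lt1; rewrite eq /= ltnNge ltnW.
have sub : linked_pairs_lt :|: swap @: linked_pairs_lt \subset linked_pairs.
  rewrite subUset; apply/andP; split; apply/subsetP => p; first by case/setIdP.
  case/imsetP => -[c d] /setIdP[] /[!inE] /and4P[cC dC cd ne] _ -> /=.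
  by rewrite cC dC eq_sym cd -link_treesC ne.
apply: leq_trans (subset_leq_card sub).
have := cardsUI linked_pairs_lt (swap @: linked_pairs_lt).
by rewrite disj cards0 addn0 card_imset // addnn mul2n => ->.
Qed.

Lemma card_linked_pairs_le : certificate ends C z WH FH -> #|linked_pairs| <= #|C| * z.-1.
Proof.
case=> _ [[CWH _] _] compW.
pose N c := (C :&: comp WH FH c) :\ c.
have sub : linked_pairs \subset \bigcup_(c in C) [set (c, d) | d in N c].
  apply/subsetP => -[c d] /[!inE] /and4P[/= cC dC cd /set0Pn[T]].
  rewrite inE => /andP[TT /andP[/set0Pn[e eE] /set0Pn[f fE]]].
  apply/bigcupP; exists c => //; apply: imset_f.
  have [_ [y yT _]] := edges_toP eE; have cW := subsetP CWH _ cC; have dW := subsetP CWH _ dC.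
  rewrite !inE eq_sym cd dC dW (connect_trans (edges_to_connect TT cW eE yT)) //.
  by rewrite connect_adjC (edges_to_connect TT dW fE yT).
apply: leq_trans (subset_leq_card sub) _; apply: leq_trans (card_bigcup_le _ _) _.
rewrite -sum_nat_const; apply: leq_sum => c cC; rewrite card_imset; last by move=> a b [].
have cW := subsetP CWH _ cC; have [_ leKz] := compW _ (imset_f (comp WH FH) cW).
have := cardsD1 c (C :&: comp WH FH c); rewrite !inE cC cW connect0 /= add1n.
by move: leKz; rewrite /N; lia.
Qed.

Lemma pruned_num_trees_le : certificate ends C z WH FH ->
  2 * num_trees_minus ends Wp Fp C + #|C| <= #|C| * (z ^ 2 + 2 * z).
Proof.
move=> cert; have [_ [[CWH _] _] _] := cert.
have t_le := leq_trans (pruned_num_trees_le_kept CWH) card_kept_trees_le.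
have L_le := leq_trans card_linked_pairs_lt (card_linked_pairs_le cert).
have [C0 | [c cC]] := set_0Vmem C.
  by move: t_le L_le; rewrite C0 cards0 !mul0n; lia.
exact: trees_count_arith (certificate_order_gt0 cert cC) t_le L_le.
Qed.

End Pruning.

Theorem lemma13 (V E : finType) (ends : E -> V * V) (C : {set V}) (z : nat)
    (WH : {set V}) (FH : {set E}) :
  certificate ends C z WH FH ->
  exists (W' : {set V}) (F' : {set E}),
    [/\ W' \subset WH, F' \subset FH, certificate ends C z W' F' &
        2 * num_trees_minus ends W' F' C + #|C| <= #|C| * (z ^ 2 + 2 * z)].
Proof.
move=> cert; have [_ [[CWH _] _] _] := cert.
exists (pruned_vertices ends C z WH FH), (pruned_edges ends C z WH FH); split.
- exact: pruned_sub.
- exact: pruned_edges_sub.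
- apply: (certificate_subgraph cert (pruned_sub _ _ _ CWH) (pruned_edges_sub _ _ _ _ _)).
  + exact: edges_in_subgraph.
  + exact: C_sub_pruned.
  + by move=> X; apply: pruned_fvs_min cert.
- exact: pruned_num_trees_le.
Qed.
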